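(* For every implication of canonical form $(\ast)$ and every environment $\eta$ of ordinary variables, if the Parametricity Condition holds for the implication and $\eta$, then the implication is binary $\eta$-valid, i.e. $\bigwedge_i\varphi_i*a_{i,1}*\cdots*a_{i,M_i}\models^2_\eta\bigvee_j\psi_j*b_{j,1}*\cdots*b_{j,N_j}$.
   Context: $\mathsf{Heap}$: finite partial functions $\mathsf{PosInt}\to\mathsf{Int}$; $g\sqsubseteq h$ means $h$ extends $g$; $h\cdot g$ is union of disjoint heaps; componentwise on $\mathsf{Heap}^n$. $\mathsf{IRel}_n$: upward closed subsets of $\mathsf{Heap}^n$; $p*q=\{\mathbf f\cdot\mathbf g\mid\mathbf f\in p,\mathbf g\in q,\text{componentwise disjoint}\}$. $\Delta_n(X)=\{(h_1,\dots,h_n)\mid\exists f\in X.\ \forall k.\ f\sqsubseteq h_k\}$ for $X\subseteq\mathsf{Heap}$. Assertions: built from primitive assertions $P$ (e.g. $E\hookrightarrow F$), assertion variables, $\mathsf{true},\mathsf{false},\wedge,\vee,*$, quantifiers over integer variables. $n$-ary meaning under $\eta$ (ordinary variables to integers) and $\rho:\mathsf{AVar}\to\mathsf{IRel}_n$: $[\![P]\!]^n=\Delta_n([\![P]\!]^{\mathrm{prim}}_\eta)$ with $[\![P]\!]^{\mathrm{prim}}_\eta\subseteq\mathsf{Heap}$ the standard meaning, $[\![a]\!]^n=\rho(a)$, connectives by $\mathsf{Heap}^n,\emptyset,\cap,\cup,*$, unions/intersections over integer values. $\varphi\models^n_\eta\psi$ ($n$-ary $\eta$-validity) means $[\![\varphi]\!]^n_{\eta,\rho}\subseteq[\![\psi]\!]^n_{\eta,\rho}$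 for all $\rho:\mathsf{AVar}\to\mathsf{IRel}_n$. Canonical form $(\ast)$: $\bigwedge_{i=1}^M\varphi_i*a_{i,1}*\cdots*a_{i,M_i}\Rightarrow\bigvee_{j=1}^N\psi_j*b_{j,1}*\cdots*b_{j,N_j}$ with $M\ge1$, $N\ge0$, $\varphi_i,\psi_j$ free of assertion variables (so their meanings do not depend on $\rho$; write $[\![\varphi_i]\!]^1_\eta$), and every $b_{j,k}$ occurring among the $a_{i,k}$. Let $V=\{a_{i,k}\}$, $\Pi(i)(c)=|\{k\mid a_{i,k}=c\}|$, $\Omega(j)(c)=|\{k\mid b_{j,k}=c\}|$ for $c\in V$; $\Pi(i)\ge\Omega(j)$ means $\Pi(i)(c)\ge\Omega(j)(c)$ for all $c\in V$. Disjunct $j$ is empty if $N_j=0$. Parametricity Condition (PC) for the implication and $\eta$: for all $h,h_1,\dots,h_M\in\mathsf{Heap}$ with $h_i\sqsubseteq h$ and $h_i\in[\![\varphi_i]\!]^1_\eta$ for all $i$, at least one of: (1) there are $i,j$ with $h_i\in[\![\psi_j]\!]^1_\eta$ and $\Pi(i)\ge\Omega(j)$; (2) there is $j$ with disjunct $j$ empty and $h\in[\![\psi_j]\!]^1_\eta$. *)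

From Stdlib Require Import ZArith PArith List Arith Fin.
Import ListNotations.
Set Implicit Arguments.

Record Heap : Type := MkHeap {
  hfun : positive -> option Z;
  hfin : exists l : list positive, forall x, hfun x <> None -> In x l
}.

Definition hle (g h : Heap) : Prop :=
  forall x v, hfun g x = Some v -> hfun h x = Some v.

Definition hunion (f g h : Heap) : Prop :=
  (forall x, hfun f x = None \/ hfun g x = None) /\
  (forall x, hfun h x = match hfun f x with Some v => Some v | None => hfun g x end).

Definition HTuple (n : nat) := Fin.t n -> Heap.

Definition hle_n {n} (g h : HTuple n) : Prop := forall k, hle (g k) (h k).

Definition upclosed {n} (p : HTuple n -> Prop) : Prop :=
  forall g h, hle_n g h -> p g -> p h.

Definition starR {n} (p q : HTuple n -> Prop) : HTuple n -> Prop :=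
  fun h => exists f g, p f /\ q g /\ forall k, hunion (f k) (g k) (h k).

Definition Delta {n} (X : Heap -> Prop) : HTuple n -> Prop :=
  fun h => exists f, X f /\ forall k, hle f (h k).

Definition var := nat.
Definition avar := nat.
Definition env := var -> Z.

Definition upd (eta : env) (x : var) (v : Z) : env :=
  fun y => if Nat.eqb y x then v else eta y.

(** Primitive assertions are a parameter [Prim], with standard (unary)
    meaning [primsem : Prim -> env -> Heap -> Prop]. *)
Inductive assn (Prim : Type) : Type :=
| APrim : Prim -> assn Prim
| AVar : avar -> assn Prim
| ATrue : assn Prim
| AFalse : assn Prim
| AAnd : assn Prim -> assn Prim -> assn Prim
| AOr : assn Prim -> assn Prim -> assn Prim
| AStar : assn Prim -> assn Prim -> assn Prim
| AEx : var -> assn Prim -> assn Prim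
| AAll : var -> assn Prim -> assn Prim.
Arguments APrim {Prim}.
Arguments AVar {Prim}.
Arguments ATrue {Prim}.
Arguments AFalse {Prim}.
Arguments AAnd {Prim}.
Arguments AOr {Prim}.
Arguments AStar {Prim}.
Arguments AEx {Prim}.
Arguments AAll {Prim}.

Fixpoint sem {Prim : Type} (primsem : Prim -> env -> Heap -> Prop) (n : nat)
  (eta : env) (rho : avar -> HTuple n -> Prop) (A : assn Prim) : HTuple n -> Prop :=
  match A with
  | APrim P => Delta (primsem P eta)
  | AVar a => rho a
  | ATrue => fun _ => True
  | AFalse => fun _ => False
  | AAnd A B => fun h => sem primsem eta rho A h /\ sem primsem eta rho B h
  | AOr A B => fun h => sem primsem eta rho A h \/ sem primsem eta rho B h
  | AStar A B => starR (sem primsem eta rho A) (sem primsem eta rho B)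
  | AEx x A => fun h => exists v : Z, sem primsem (upd eta x v) rho A h
  | AAll x A => fun h => forall v : Z, sem primsem (upd eta x v) rho A h
  end.

Definition valid_n {Prim : Type} (primsem : Prim -> env -> Heap -> Prop) (n : nat)
  (eta : env) (phi psi : assn Prim) : Prop :=
  forall rho : avar -> HTuple n -> Prop,
    (forall a, upclosed (rho a)) ->
    forall h, sem primsem eta rho phi h -> sem primsem eta rho psi h.

Fixpoint avar_free {Prim : Type} (A : assn Prim) : Prop :=
  match A with
  | AVar _ => False
  | APrim _ | ATrue | AFalse => True
  | AAnd A B | AOr A B | AStar A B => avar_free A /\ avar_free B
  | AEx _ A | AAll _ A => avar_free A
  end.

(** unary meaning [[phi]]^1_eta of an assertion-variable-free phi, as a set of
    heaps (rho is irrelevant for such phi; we take the full relation). *)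
Definition sem1 {Prim : Type} (primsem : Prim -> env -> Heap -> Prop) (eta : env)
  (A : assn Prim) (h : Heap) : Prop :=
  sem primsem (n := 1) eta (fun _ _ => True) A (fun _ => h).

Definition starVars {Prim : Type} (phi : assn Prim) (as_ : list avar) : assn Prim :=
  fold_left (fun acc a => AStar acc (AVar a)) as_ phi.

Fixpoint bigAnd {Prim : Type} (l : list (assn Prim)) : assn Prim :=
  match l with
  | [] => ATrue
  | [x] => x
  | x :: l' => AAnd x (bigAnd l')
  end.
Fixpoint bigOr {Prim : Type} (l : list (assn Prim)) : assn Prim :=
  match l with
  | [] => AFalse
  | [x] => x
  | x :: l' => AOr x (bigOr l')
  end.

(** A canonical implication is given by the list of antecedent conjuncts
    (phi_i, [a_{i,1};...;a_{i,M_i}]) and consequent disjuncts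
    (psi_j, [b_{j,1};...;b_{j,N_j}]). *)
Definition canonical {Prim : Type} (L : list (assn Prim * list avar))
  (R : list (assn Prim * list avar)) : Prop :=
  1 <= length L /\
  (forall p, In p L -> avar_free (fst p)) /\
  (forall q, In q R -> avar_free (fst q)) /\
  (forall q b, In q R -> In b (snd q) -> exists p, In p L /\ In b (snd p)).

Definition lhs {Prim : Type} (L : list (assn Prim * list avar)) : assn Prim :=
  bigAnd (map (fun p => starVars (fst p) (snd p)) L).
Definition rhs {Prim : Type} (R : list (assn Prim * list avar)) : assn Prim :=
  bigOr (map (fun q => starVars (fst q) (snd q)) R).

(** V = set of all a_{i,k}; Pi(i) >= Omega(j) as multiplicity functions on V *)
Definition mult_ge {Prim : Type} (L : list (assn Prim * list avar))
  (as_ bs : list avar) : Prop :=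
  forall c, (exists p, In p L /\ In c (snd p)) ->
    count_occ Nat.eq_dec bs c <= count_occ Nat.eq_dec as_ c.

Definition PC {Prim : Type} (primsem : Prim -> env -> Heap -> Prop)
  (L R : list (assn Prim * list avar)) (eta : env) : Prop :=
  forall (h : Heap) (hs : nat -> Heap),
    (forall i, i < length L ->
       hle (hs i) h /\ sem1 primsem eta (fst (nth i L (ATrue, []))) (hs i)) ->
    (exists i j, i < length L /\ j < length R /\
       sem1 primsem eta (fst (nth j R (ATrue, []))) (hs i) /\
       mult_ge L (snd (nth i L (ATrue, []))) (snd (nth j R (ATrue, []))))
    \/
    (exists j, j < length R /\ snd (nth j R (ATrue, [])) = [] /\
       sem1 primsem eta (fst (nth j R (ATrue, []))) h).

(** Let h be a pair of heaps satisfying every conjunct phi_i * a_{i,1} * ... of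
    the antecedent.  For each i we pick a pair F_i in [[phi_i]]^2 out of which h
    is built by starring with relations from rho.  Since phi_i mentions no
    assertion variable, the componentwise meet of F_i lies in [[phi_i]]^1, and
    the meets of the F_i all lie below the meet of h; so the Parametricity
    Condition applies to these unary heaps.
    - In case (1), psi_j holds of meet F_i; lifting diagonally and closing
      upwards gives psi_j at every pair above F_i.  As the b_{j,k} form a
      sub-multiset of the a_{i,k}, we permute the a's so the b's come last and
      absorb the remaining factors into the psi_j part.
    - In case (2), psi_j holds of meet h, hence of h, and disjunct j is empty. *)

From Stdlib Require Import ZArith List Permutation Lia.
Import ListNotations.
Set Implicit Arguments.

Definition hmeet (a b : Heap) : Heap.
Proof.
  refine (MkHeap (fun x => match hfun a x, hfun b x with
    | Some v, Some w => if Z.eq_dec v w then Some v else None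
    | _, _ => None end) _).
  destruct (hfin a) as [l Hl]. exists l. intros x Hx. apply Hl. intro E.
  rewrite E in Hx. apply Hx. reflexivity.
Defined.

Definition hminus (h f : Heap) : Heap.
Proof.
  refine (MkHeap (fun x => match hfun f x with
    | Some _ => None | None => hfun h x end) _).
  destruct (hfin h) as [l Hl]. exists l. intros x Hx. apply Hl. intro E.
  apply Hx. destruct (hfun f x); [reflexivity | exact E].
Defined.

Definition hjoin (f g : Heap) : Heap.
Proof.
  refine (MkHeap (fun x => match hfun f x with
    | Some v => Some v | None => hfun g x end) _).
  destruct (hfin f) as [l1 H1]. destruct (hfin g) as [l2 H2]. exists (l1 ++ l2).
  intros x Hx. apply in_or_app. destruct (hfun f x) eqn:E.
  - left; apply H1; congruence.
  - right; apply H2; exact Hx.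
Defined.

(** Heap identities are checked cell by cell: fix a location x, instantiate
    every hypothesis at x and split on the contents of every heap at x. *)
Ltac pointwise :=
  unfold hle, hunion in *; intros;
  repeat match goal with H : _ /\ _ |- _ => destruct H end;
  repeat split; intros;
  match goal with x : positive |- _ =>
    repeat match goal with H : forall y : positive, _ |- _ => specialize (H x) end;
    cbn in *;
    repeat match goal with
    | |- context [hfun ?h x] => destruct (hfun h x)
    | H : context [hfun ?h x] |- _ => destruct (hfun h x)
    | |- context [Z.eq_dec ?a ?b] => destruct (Z.eq_dec a b)
    | H : context [Z.eq_dec ?a ?b] |- _ => destruct (Z.eq_dec a b)
    end
  end;
  repeat match goal with
  | H : forall v, Some ?z = Some v -> _ |- _ => specialize (H z eq_refl)
  | H : forall v, None = Some v -> _ |- _ => clear H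
  end; intuition congruence.

Lemma hle_refl (h : Heap) : hle h h.
Proof. intros x v; auto. Qed.

Lemma hle_trans (a b c : Heap) : hle a b -> hle b c -> hle a c.
Proof. unfold hle; eauto. Qed.

Lemma hmeet_l (a b : Heap) : hle (hmeet a b) a.
Proof. pointwise. Qed.

Lemma hmeet_r (a b : Heap) : hle (hmeet a b) b.
Proof. pointwise. Qed.

Lemma hmeet_glb (f a b : Heap) : hle f a -> hle f b -> hle f (hmeet a b).
Proof. pointwise. Qed.

Lemma hunion_le_l (f g h : Heap) : hunion f g h -> hle f h.
Proof. pointwise. Qed.

Lemma hunion_extend (f g h h' : Heap) :
  hunion f g h -> hle h h' -> hunion f (hminus h' f) h' /\ hle g (hminus h' f).
Proof. pointwise. Qed.

Lemma hunion_rotate (f ga f' gb h : Heap) :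
  hunion f ga f' -> hunion f' gb h ->
  hunion f gb (hjoin f gb) /\ hunion (hjoin f gb) ga h.
Proof. pointwise. Qed.

Lemma hunion_meet (f1 g1 h1 f2 g2 h2 : Heap) :
  hunion f1 g1 h1 -> hunion f2 g2 h2 ->
  hunion (hmeet f1 f2) (hminus (hmeet h1 h2) (hmeet f1 f2)) (hmeet h1 h2) /\
  hle (hmeet g1 g2) (hminus (hmeet h1 h2) (hmeet f1 f2)).
Proof. pointwise. Qed.

Lemma hunion_congr {f g h h' : Heap} :
  hunion f g h -> (forall x, hfun h x = hfun h' x) -> hunion f g h'.
Proof. intros [D E] Hh; split; [exact D | intro x; rewrite <- Hh; apply E]. Qed.

Lemma fin1 (k : Fin.t 1) : k = Fin.F1.
Proof. apply (Fin.caseS' k); [reflexivity |]. intro p; inversion p. Qed.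

Lemma fin2 (k : Fin.t 2) : k = Fin.F1 \/ k = Fin.FS Fin.F1.
Proof.
  apply (Fin.caseS' k); [left; reflexivity |]. intro p.
  apply (Fin.caseS' p); [right; reflexivity |]. intro q; inversion q.
Qed.

Lemma hle_n_refl {n} (h : HTuple n) : hle_n h h.
Proof. intro k; apply hle_refl. Qed.

Lemma hle_n_tuple1 (f : HTuple 1) : hle_n f (fun _ => f Fin.F1).
Proof. intro k; rewrite (fin1 k); apply hle_refl. Qed.

(** Pointwise equality of tuples (heaps carry proofs, so Leibniz equality is
    too strong). *)
Definition heq_n {n} (f g : HTuple n) : Prop :=
  forall k x, hfun (f k) x = hfun (g k) x.

Lemma heq_n_hle_n {n} (f g h : HTuple n) : heq_n f g -> hle_n g h -> hle_n f h.
Proof. intros E Hle k x v Hx. apply Hle. rewrite <- E. exact Hx. Qed.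

Definition meet2 (F : HTuple 2) : Heap := hmeet (F Fin.F1) (F (Fin.FS Fin.F1)).

Lemma meet2_le (F : HTuple 2) : hle_n (fun _ => meet2 F) F.
Proof. intro k. destruct (fin2 k) as [-> | ->]; [apply hmeet_l | apply hmeet_r]. Qed.

Lemma meet2_mono (F H : HTuple 2) : hle_n F H -> hle (meet2 F) (meet2 H).
Proof.
  intro Hle. apply hmeet_glb; eapply hle_trans;
    [apply hmeet_l | apply Hle | apply hmeet_r | apply Hle].
Qed.

Section Semantics.
Variables (Prim : Type) (ps : Prim -> env -> Heap -> Prop).

Lemma sem_up {n : nat} {rho : avar -> HTuple n -> Prop} :
  (forall a, upclosed (rho a)) ->
  forall (A : assn Prim) eta, upclosed (sem ps eta rho A).
Proof.
  intros Hrho A. unfold upclosed in *.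
  induction A; intros eta h h' Hle Hs; simpl in *.
  - destruct Hs as [f [Hf Hl]]. exists f; split; auto.
    intro k; eapply hle_trans; eauto.
  - eapply Hrho; eauto.
  - exact I.
  - exact Hs.
  - destruct Hs; split; eauto.
  - destruct Hs; [left | right]; eauto.
  - destruct Hs as [f [g [Hf [Hg Hu]]]].
    exists f, (fun k => hminus (h' k) (f k)). split; [exact Hf | split].
    + apply (IHA2 eta g); [| exact Hg].
      intro k; apply (hunion_extend (Hu k) (Hle k)).
    + intro k; apply (hunion_extend (Hu k) (Hle k)).
  - destruct Hs as [z Hz]; exists z; eauto.
  - intro z; eauto.
Qed.

Lemma full_upclosed (n : nat) : upclosed (n := n) (fun _ => True).
Proof. intros g h _ _; exact I. Qed.

Lemma sem_meet {rho : avar -> HTuple 2 -> Prop} {A : assn Prim} :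
  avar_free A -> forall eta F, sem ps eta rho A F -> sem1 ps eta A (meet2 F).
Proof.
  unfold sem1; induction A; intros Hfree eta F Hs; simpl in *.
  - destruct Hs as [f [Hf Hl]]. exists f; split; auto.
    intro k; apply hmeet_glb; apply Hl.
  - contradiction.
  - exact I.
  - exact Hs.
  - destruct Hfree, Hs; split; eauto.
  - destruct Hfree; destruct Hs; [left | right]; eauto.
  - destruct Hfree as [Hfree1 Hfree2]. destruct Hs as [f [g [Hf [Hg Hu]]]].
    pose proof (hunion_meet (Hu Fin.F1) (Hu (Fin.FS Fin.F1))) as [Hunion Hrest].
    exists (fun _ => meet2 f), (fun _ => hminus (meet2 F) (meet2 f)).
    split; [eauto | split; [| intro; exact Hunion]].
    eapply sem_up; [intro; apply full_upclosed | | exact (IHA2 Hfree2 eta g Hg)].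
    intro; exact Hrest.
  - destruct Hs as [z Hz]; exists z; eauto.
  - intro z; eauto.
Qed.

Lemma sem_diag {n : nat} {rho : avar -> HTuple n -> Prop} {A : assn Prim} :
  avar_free A -> forall eta x, sem1 ps eta A x -> sem ps eta rho A (fun _ => x).
Proof.
  unfold sem1; induction A; intros Hfree eta x Hs; simpl in *.
  - destruct Hs as [f [Hf Hl]]. exists f; split; auto. intro k; apply (Hl Fin.F1).
  - contradiction.
  - exact I.
  - exact Hs.
  - destruct Hfree, Hs; split; eauto.
  - destruct Hfree; destruct Hs; [left | right]; eauto.
  - destruct Hfree as [Hfree1 Hfree2]. destruct Hs as [f [g [Hf [Hg Hu]]]].
    exists (fun _ => f Fin.F1), (fun _ => g Fin.F1).
    split; [| split; [| intro; apply (Hu Fin.F1)]]; [apply IHA1 | apply IHA2]; auto;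
      (eapply sem_up; [intro; apply full_upclosed | apply hle_n_tuple1 | assumption]).
  - destruct Hs as [z Hz]; exists z; eauto.
  - intro z; eauto.
Qed.

Lemma unary_to_binary {rho : avar -> HTuple 2 -> Prop} {psi : assn Prim} {eta : env}
    {F h : HTuple 2} :
  (forall a, upclosed (rho a)) -> avar_free psi ->
  sem1 ps eta psi (meet2 F) -> hle_n F h -> sem ps eta rho psi h.
Proof.
  intros Hrho Hfree Hpsi Hle.
  apply (sem_up Hrho psi eta Hle), (sem_up Hrho psi eta (meet2_le F)).
  apply sem_diag; assumption.
Qed.

Lemma sem_bigAnd_elim (n : nat) eta (rho : avar -> HTuple n -> Prop) l h :
  sem ps eta rho (bigAnd l) h -> forall A, In A l -> sem ps eta rho A h.
Proof.
  induction l as [| x l IH]; [simpl; tauto |].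
  destruct l as [| y l'].
  - intros H A [<- | []]; auto.
  - intros [H1 H2] A [<- | HA]; auto.
Qed.

Lemma sem_bigOr_intro (n : nat) eta (rho : avar -> HTuple n -> Prop) l h :
  forall A, In A l -> sem ps eta rho A h -> sem ps eta rho (bigOr l) h.
Proof.
  induction l as [| x l IH]; [simpl; tauto |].
  destruct l as [| y l'].
  - intros A [<- | []]; auto.
  - intros A [<- | HA] H; [left | right]; eauto.
Qed.

End Semantics.

Section StarIter.
Variables (n : nat) (rho : avar -> HTuple n -> Prop).

Definition starIter (P : HTuple n -> Prop) (l : list avar) : HTuple n -> Prop :=
  fold_left (fun X a => starR X (rho a)) l P.

Lemma sem_starVars {Prim : Type} (ps : Prim -> env -> Heap -> Prop) eta l :
  forall phi h, sem ps eta rho (starVars phi l) h <-> starIter (sem ps eta rho phi) l h.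
Proof.
  induction l as [| a l IH]; intros phi h; simpl; [tauto |].
  apply (IH (AStar phi (AVar a)) h).
Qed.

Lemma starIter_mono {P Q : HTuple n -> Prop} {l : list avar} {h : HTuple n} :
  (forall x, P x -> Q x) -> starIter P l h -> starIter Q l h.
Proof.
  revert P Q h; induction l as [| a l IH]; intros P Q h HPQ; simpl; auto.
  apply IH. intros x [f [g [Hf Hg]]]. exists f, g; auto.
Qed.

Lemma starR_swap (P A B : HTuple n -> Prop) h :
  starR (starR P A) B h -> starR (starR P B) A h.
Proof.
  intros [f' [gb [[f [ga [Hf [Ha Hu1]]]] [Hb Hu2]]]].
  exists (fun k => hjoin (f k) (gb k)), ga.
  split; [exists f, gb; split; [exact Hf | split; [exact Hb |]] | split; [exact Ha |]];
    intro k; apply (hunion_rotate (Hu1 k) (Hu2 k)).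
Qed.

Lemma starIter_perm {l l' : list avar} : Permutation l l' ->
  forall {P : HTuple n -> Prop} {h : HTuple n}, starIter P l h -> starIter P l' h.
Proof.
  induction 1; intros P h; simpl; auto.
  apply starIter_mono. intro z; apply starR_swap.
Qed.

Lemma starIter_app {l1 l2 : list avar} {P : HTuple n -> Prop} {h : HTuple n} :
  starIter P (l1 ++ l2) h -> starIter (starIter P l1) l2 h.
Proof. unfold starIter; rewrite fold_left_app; auto. Qed.

Lemma starIter_extract {P : HTuple n -> Prop} {l : list avar} {h : HTuple n} :
  starIter P l h -> exists F, P F /\ starIter (heq_n F) l h.
Proof.
  revert P h; induction l as [| a l IH]; intros P h H; simpl in *.
  - exists h; split; [exact H | intros k y; reflexivity].
  - destruct (IH _ _ H) as [f' [[f [g [Hf [Hg Hu]]]] Hrest]].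
    exists f; split; [exact Hf |]. eapply starIter_mono; [| exact Hrest].
    intros x Hx. exists f, g. split; [intros k y; reflexivity | split; [exact Hg |]].
    intro k. apply (hunion_congr (Hu k) (Hx k)).
Qed.

Lemma starIter_below {P : HTuple n -> Prop} {l : list avar} {h : HTuple n} :
  starIter P l h -> exists f, P f /\ hle_n f h.
Proof.
  revert P h; induction l as [| a l IH]; intros P h H; simpl in *.
  - exists h; split; [exact H | apply hle_n_refl].
  - destruct (IH _ _ H) as [f' [[f [g [Hf [Hg Hu]]]] Hle]].
    exists f; split; [exact Hf |].
    intro k; apply (hle_trans (hunion_le_l (Hu k)) (Hle k)).
Qed.

Lemma starIter_heq_below {F h : HTuple n} {l : list avar} :
  starIter (heq_n F) l h -> hle_n F h.
Proof.
  intro H. destruct (starIter_below H) as [f [Hf Hle]].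
  exact (heq_n_hle_n Hf Hle).
Qed.

End StarIter.

Lemma count_le_perm_split (bs : list avar) : forall as_ : list avar,
  (forall c, count_occ Nat.eq_dec bs c <= count_occ Nat.eq_dec as_ c) ->
  exists rest, Permutation as_ (rest ++ bs).
Proof.
  induction bs as [| b bs IH]; intros as_ H.
  - exists as_. rewrite app_nil_r; auto.
  - assert (Hb : In b as_).
    { apply (count_occ_In Nat.eq_dec). specialize (H b). simpl in H.
      destruct Nat.eq_dec; [lia | congruence]. }
    destruct (in_split _ _ Hb) as [l1 [l2 ->]].
    destruct (IH (l1 ++ l2)) as [rest Hr].
    { intro c. specialize (H c). rewrite count_occ_app in *. simpl in H.
      destruct Nat.eq_dec; lia. }
    exists rest.
    apply (perm_trans (Permutation_sym (Permutation_middle l1 l2 b))).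
    apply (perm_trans (perm_skip b Hr)), Permutation_middle.
Qed.

(** Choice over an initial segment of nat needs no axiom. *)
Lemma finite_choice {A : Type} (d : A) (P : nat -> A -> Prop) (m : nat) :
  (forall i, i < m -> exists x, P i x) ->
  exists f : nat -> A, forall i, i < m -> P i (f i).
Proof.
  induction m as [| m IH]; intro H.
  - exists (fun _ => d); intros i Hi; lia.
  - destruct IH as [f Hf]; [intros i Hi; apply H; lia |].
    destruct (H m (Nat.lt_succ_diag_r m)) as [x Hx].
    exists (fun i => if Nat.eqb i m then x else f i). intros i Hi.
    destruct (Nat.eqb_spec i m) as [-> | Hne]; [exact Hx | apply Hf; lia].
Qed.

Section Canonical.
Context {Prim : Type} (ps : Prim -> env -> Heap -> Prop) {eta : env}
  {rho : avar -> HTuple 2 -> Prop}.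
Hypothesis Hrho : forall a, upclosed (rho a).

Lemma lhs_conjunct {L : list (assn Prim * list avar)} {h : HTuple 2} {p} :
  sem ps eta rho (lhs L) h -> In p L ->
  exists F, sem ps eta rho (fst p) F /\ starIter rho (heq_n F) (snd p) h.
Proof.
  intros Hlhs Hp.
  assert (Hs : sem ps eta rho (starVars (fst p) (snd p)) h).
  { eapply sem_bigAnd_elim; [exact Hlhs |]. apply in_map_iff. exists p; auto. }
  apply sem_starVars in Hs. exact (starIter_extract rho Hs).
Qed.

Lemma rhs_disjunct {R : list (assn Prim * list avar)} {h : HTuple 2} {q} :
  In q R -> sem ps eta rho (starVars (fst q) (snd q)) h -> sem ps eta rho (rhs R) h.
Proof.
  intro Hq. apply sem_bigOr_intro. apply in_map_iff. exists q; auto.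
Qed.

Lemma matched_disjunct {psi : assn Prim} {as_ bs : list avar} {F h : HTuple 2} :
  avar_free psi -> sem1 ps eta psi (meet2 F) ->
  (forall c, count_occ Nat.eq_dec bs c <= count_occ Nat.eq_dec as_ c) ->
  starIter rho (heq_n F) as_ h -> sem ps eta rho (starVars psi bs) h.
Proof.
  intros Hfree Hpsi Hcount Hstar.
  destruct (count_le_perm_split bs as_ Hcount) as [rest Hperm].
  apply (starIter_perm rho Hperm), (starIter_app rho) in Hstar.
  apply sem_starVars. eapply (starIter_mono rho); [| exact Hstar].
  intros x Hx. exact (unary_to_binary ps Hrho Hfree Hpsi (starIter_heq_below rho Hx)).
Qed.

(** Variables of a consequent disjunct occur in the antecedent, so the
    multiplicity comparison restricted to V holds everywhere. *)
Lemma mult_ge_counts {L R : list (assn Prim * list avar)} {as_ : list avar} {q} :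
  canonical L R -> In q R -> mult_ge L as_ (snd q) ->
  forall c, count_occ Nat.eq_dec (snd q) c <= count_occ Nat.eq_dec as_ c.
Proof.
  intros [_ [_ [_ HRvars]]] Hq Hge c.
  destruct (count_occ Nat.eq_dec (snd q) c) eqn:E; [lia |].
  rewrite <- E. apply Hge, (HRvars _ c Hq), (count_occ_In Nat.eq_dec). lia.
Qed.

End Canonical.

Theorem mainTheorem4 (Prim : Type) (primsem : Prim -> env -> Heap -> Prop)
  (L R : list (assn Prim * list avar)) (eta : env) :
  canonical L R ->
  PC primsem L R eta ->
  valid_n primsem 2 eta (lhs L) (rhs R).
Proof.
  intros Hcan HPC rho Hrho h Hlhs.
  pose proof Hcan as [_ [HLfree [HRfree _]]].
  set (d := (@ATrue Prim, @nil avar)).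
  destruct (finite_choice h (fun i F => sem primsem eta rho (fst (nth i L d)) F /\
              starIter rho (heq_n F) (snd (nth i L d)) h) (m := length L)) as [Fs HFs].
  { intros i Hi. exact (lhs_conjunct primsem Hlhs (nth_In L d Hi)). }
  destruct (HPC (meet2 h) (fun i => meet2 (Fs i)))
    as [[i [j [Hi [Hj [Hpsi Hge]]]]] | [j [Hj [Hnil Hpsi]]]].
  - intros i Hi. destruct (HFs i Hi) as [HF Hstar]. split.
    + exact (meet2_mono (starIter_heq_below rho Hstar)).
    + exact (sem_meet primsem (HLfree _ (nth_In L d Hi)) eta (Fs i) HF).
  - pose proof (nth_In R d Hj) as HjR.
    apply (rhs_disjunct primsem HjR). destruct (HFs i Hi) as [_ Hstar].
    exact (matched_disjunct primsem Hrho (HRfree _ HjR) Hpsi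
             (mult_ge_counts Hcan HjR Hge) Hstar).
  - pose proof (nth_In R d Hj) as HjR.
    apply (rhs_disjunct primsem HjR). change (snd (nth j R d) = []) in Hnil. rewrite Hnil.
    exact (unary_to_binary primsem Hrho (HRfree _ HjR) Hpsi (hle_n_refl h)).
Qed.
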